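(* Let each $f_\xi:\mathbb{R}^d\to\mathbb{R}$ ($\xi\sim\mathcal{D}$) be differentiable and $\mu$-strongly convex with $\mu>0$, let $f=\mathbb{E}_{\xi\sim\mathcal{D}}[f_\xi]$ with minimizer $x_\star$, and suppose there exists $\delta\ge0$ with $\mathbb{E}_{\xi\sim\mathcal{D}}\|\nabla f_\xi(x)-\nabla f(x)-\nabla f_\xi(x_\star)\|^2\le\delta^2\|x-x_\star\|^2$ for all $x\in\mathbb{R}^d$. Consider SPPM-GC: from arbitrary $x_0\in\mathbb{R}^d$, sample $\xi_k\sim\mathcal{D}$ independently and set $x_{k+1}=\operatorname{prox}_{\gamma f_{\xi_k}}\big(x_k+\gamma(\nabla f_{\xi_k}(x_k)-\nabla f(x_k))\big)$. Then for any $\gamma>0$ and all $k\ge0$, $$\mathbb{E}\|x_k-x_\star\|^2\le\left(\frac{1+\gamma^2\delta^2}{(1+\gamma\mu)^2}\right)^k\|x_0-x_\star\|^2.$$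
   Context: $\operatorname{prox}_{\gamma\phi}(y):=\arg\min_{x\in\mathbb{R}^d}\{\phi(x)+\frac{1}{2\gamma}\|x-y\|^2\}$. $\mu$-strong convexity of $g$: $g(y)+\langle\nabla g(y),x-y\rangle+\frac{\mu}{2}\|x-y\|^2\le g(x)$ for all $x,y$. $\nabla f=\mathbb{E}[\nabla f_\xi]$. *)

From HB Require Import structures.
From mathcomp Require Import all_boot all_order all_algebra.
From mathcomp Require Import all_classical all_reals all_analysis.
Set Implicit Arguments. Unset Strict Implicit. Unset Printing Implicit Defensive.
Import Order.TTheory GRing.Theory Num.Theory.
Import numFieldNormedType.Exports.
Local Open Scope classical_set_scope.
Local Open Scope ring_scope.

Definition dotv (R : realType) (d : nat) (u v : 'rV[R]_d) : R :=
  \sum_(i < d) u 0 i * v 0 i.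
Definition sqnorm (R : realType) (d : nat) (v : 'rV[R]_d) : R :=
  \sum_(i < d) v 0 i ^+ 2.

Definition grad (R : realType) (d : nat) (phi : 'rV[R]_d -> R) (x : 'rV[R]_d)
  : 'rV[R]_d := \row_(i < d) ('d phi x) (delta_mx 0 i).

Definition prox (R : realType) (d : nat) (phi : 'rV[R]_d -> R) (gamma : R)
  (y : 'rV[R]_d) : 'rV[R]_d :=
  xget 0 [set p | forall x, phi p + (2 * gamma)^-1 * sqnorm (p - y)
                          <= phi x + (2 * gamma)^-1 * sqnorm (x - y)].

Definition strongly_convex (R : realType) (d : nat) (mu : R)
  (g : 'rV[R]_d -> R) : Prop :=
  forall x y, g y + dotv (grad g y) (x - y) + mu / 2 * sqnorm (x - y) <= g x.

Section Sppm.
Context (R : realType) (d : nat) (dx : measure_display) (Xi : measurableType dx)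
  (D : probability Xi R) (F : Xi -> 'rV[R]_d -> R).

Definition fexp (x : 'rV[R]_d) : R := Rintegral D setT (fun xi => F xi x).

(* grad f = E_xi [grad f_xi]  (coordinatewise expectation) *)
Definition gradf (x : 'rV[R]_d) : 'rV[R]_d :=
  \row_(i < d) Rintegral D setT (fun xi => grad (F xi) x 0 i).

Definition sppm_gc_step (gamma : R) (xi : Xi) (x : 'rV[R]_d) : 'rV[R]_d :=
  prox (F xi) gamma (x + gamma *: (grad (F xi) x - gradf x)).

(* sppm_gc_err gamma xs k x = E || x_k - xs ||^2, where x_0 = x and
   x_{j+1} = sppm_gc_step gamma xi_j x_j with xi_0, xi_1, ... i.i.d. ~ D.
   (Expectation over the i.i.d. samples written as iterated integrals.) *)
Fixpoint sppm_gc_err (gamma : R) (xs : 'rV[R]_d) (k : nat) (x : 'rV[R]_d)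
  : \bar R :=
  match k with
  | 0 => (sqnorm (x - xs))%:E
  | k'.+1 => (\int[D]_(xi in setT) sppm_gc_err gamma xs k' (sppm_gc_step gamma xi x))%E
  end.

End Sppm.

From HB Require Import structures.
From mathcomp Require Import all_boot all_order all_algebra.
From mathcomp Require Import all_classical all_reals all_analysis.
From mathcomp Require Import ring lra.
Import Order.TTheory GRing.Theory Num.Theory.
Import numFieldNormedType.Exports.
Local Open Scope classical_set_scope.
Local Open Scope ring_scope.

(* A proximal step contracts: if [phi] is [mu]-strongly convex and
   [p = prox_{gamma phi}(y)], first-order optimality of [p] combined with strong
   convexity at [z] gives [(1 + gamma mu)^2 |p - z|^2 <= |y - z - gamma grad phi(z)|^2].
   For an SPPM-GC step take [z = xs] and [y = x + gamma (grad f_xi(x) - grad f(x))];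
   then [y - xs - gamma grad f_xi(xs) = x - xs + gamma n_xi], where the noise
   [n_xi = grad f_xi(x) - grad f(x) - grad f_xi(xs)] has mean [- grad f(xs) = 0].
   The cross term therefore vanishes in expectation, and the variance bound gives
   [E |x - xs + gamma n_xi|^2 <= (1 + gamma^2 delta^2) |x - xs|^2]; iterate.
   Since [prox] is defined by choice, one also needs that strongly convex
   functions attain their infimum: by the midpoint inequality a minimizing
   sequence is Cauchy, and the gradient inequality passes to its limit. *)

Section RealLimits.
Context {R : realType}.

Lemma le0_of_le_small (a c : R) : (forall t : R, 0 < t <= 1 -> a <= t * c) -> a <= 0.
Proof.
move=> small; apply/ler_addgt0Pr => e e0; rewrite add0r.
have c0 : 0 <= `|c| by [].
have ce0 : 0 < `|c| + e by lra.
have t0 : 0 < e / (`|c| + e) by rewrite divr_gt0.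
have t1 : e / (`|c| + e) <= 1 by rewrite ler_pdivrMr //; lra.
apply: le_trans (small (e / (`|c| + e)) _) _; first by rewrite t0 t1.
apply: le_trans (ler_wpM2l (ltW t0) (ler_norm c)) _.
by rewrite mulrAC ler_pdivrMr //; nra.
Qed.

Lemma le0_of_le_harmonic (a C : R) : (forall n, a <= C / n.+1%:R) -> a <= 0.
Proof.
move=> harmonic_bound; apply: (@le0_of_le_small _ `|C|) => t /andP[t0 _].
have tV0 : 0 <= t^-1 by rewrite invr_ge0 ltW.
set n := Num.bound t^-1.
have lt_tV_n : t^-1 < n.+1%:R.
  by apply: lt_le_trans (archi_boundP tV0) _; rewrite ler_nat.
have le_n_t : n.+1%:R^-1 <= t.
  by rewrite -(invrK t) lef_pV2 ?posrE ?invr_gt0 ?ltr0Sn // ltW.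
apply: le_trans (harmonic_bound n) _; rewrite [t * _]mulrC.
by apply: le_trans (ler_wpM2r _ (ler_norm C)) (ler_wpM2l _ le_n_t).
Qed.

Lemma cauchy_sq_lim (s : nat -> R) (C : R) :
  (forall n k, (n <= k)%N -> (s n - s k) ^+ 2 <= C / n.+1%:R) ->
  exists l, forall n, (s n - l) ^+ 2 <= C / n.+1%:R.
Proof.
move=> s_cauchy.
have b0 : (fun n => C / n.+1%:R) @ \oo --> (0 : R).
  rewrite -(mulr0 C); apply: cvgM; [exact: cvg_cst | exact: cvg_harmonic].
have s_cvg : cvgn s.
  apply/cauchy_cvgP/cauchy_exP => e e0.
  have [N _ N_small] := cvgr_lt _ b0 _ (exprn_gt0 2 e0).
  exists (s N); apply: filterS (nbhs_infty_ge N) => n Nn /=.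
  have : `|s N - s n| ^+ 2 < e ^+ 2.
    by rewrite real_normK ?num_real // (le_lt_trans (s_cauchy _ _ Nn)) // N_small /=.
  by rewrite ltr_pXn2r // ?nnegrE ?ltW.
exists (lim (s @ \oo)) => n.
apply: (@cvgr_to_le nat \oo _ R (fun k => (s n - s k) ^+ 2)).
  have sk : (fun k => s n - s k) @ \oo --> s n - lim (s @ \oo).
    by apply: cvgB => //; exact: cvg_cst.
  by rewrite expr2; exact: (cvgM sk sk).
by apply: filterS (nbhs_infty_ge n) => k; exact: s_cauchy.
Qed.

End RealLimits.

Section Euclidean.
Context {R : realType} {d : nat}.
Implicit Types u v w : 'rV[R]_d.

Lemma dotvC u v : dotv u v = dotv v u.
Proof. by apply: eq_bigr => i _; rewrite mulrC. Qed.

Lemma dotvDl u v w : dotv (u + v) w = dotv u w + dotv v w.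
Proof. by rewrite /dotv -big_split; apply: eq_bigr => i _; rewrite mxE mulrDl. Qed.

Lemma dotvDr u v w : dotv w (u + v) = dotv w u + dotv w v.
Proof. by rewrite dotvC dotvDl !(dotvC w). Qed.

Lemma dotvZl (a : R) u v : dotv (a *: u) v = a * dotv u v.
Proof. by rewrite /dotv mulr_sumr; apply: eq_bigr => i _; rewrite mxE mulrA. Qed.

Lemma dotvZr (a : R) u v : dotv u (a *: v) = a * dotv u v.
Proof. by rewrite dotvC dotvZl dotvC. Qed.

Lemma dotvNl u v : dotv (- u) v = - dotv u v.
Proof. by rewrite -scaleN1r dotvZl mulN1r. Qed.

Lemma dotvNr u v : dotv u (- v) = - dotv u v.
Proof. by rewrite dotvC dotvNl dotvC. Qed.

Lemma dotvv u : dotv u u = sqnorm u.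
Proof. by apply: eq_bigr => i _; rewrite expr2. Qed.

Lemma sqnormD u v : sqnorm (u + v) = sqnorm u + 2 * dotv u v + sqnorm v.
Proof. by rewrite -!dotvv dotvDl !dotvDr (dotvC v u); ring. Qed.

Lemma sqnormZ (a : R) u : sqnorm (a *: u) = a ^+ 2 * sqnorm u.
Proof. by rewrite -!dotvv dotvZl dotvZr mulrA expr2. Qed.

Lemma sqnormN u : sqnorm (- u) = sqnorm u.
Proof. by rewrite -scaleN1r sqnormZ sqrrN expr1n mul1r. Qed.

Lemma sqnorm_ge0 u : 0 <= sqnorm u.
Proof. by rewrite sumr_ge0 // => i _; rewrite sqr_ge0. Qed.

Lemma sqr_coord_le_sqnorm u i : u 0 i ^+ 2 <= sqnorm u.
Proof. by rewrite /sqnorm (bigD1 i) //= lerDl sumr_ge0 // => j _; rewrite sqr_ge0. Qed.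

Lemma coordB u v i : (u - v) 0 i = u 0 i - v 0 i.
Proof. by rewrite !mxE. Qed.

Lemma coord0 i : (0 : 'rV[R]_d) 0 i = 0.
Proof. by rewrite mxE. Qed.

Lemma sqnorm0 : sqnorm (0 : 'rV[R]_d) = 0.
Proof. by rewrite /sqnorm big1 // => i _; rewrite mxE expr0n. Qed.

Lemma sqnorm_le0 u : sqnorm u <= 0 -> u = 0.
Proof.
move=> u0; apply/rowP => i; rewrite mxE; apply/eqP; rewrite -sqrf_eq0 eq_le sqr_ge0.
by rewrite (le_trans (sqr_coord_le_sqnorm u i)).
Qed.

Lemma dotv_young u v (s : R) : - (2 * s * dotv u v) <= sqnorm u + s ^+ 2 * sqnorm v.
Proof. by have := sqnorm_ge0 (u + s *: v); rewrite sqnormD sqnormZ dotvZr; lra. Qed.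

Lemma rV_cauchy_lim (ps : nat -> 'rV[R]_d) (C : R) :
  (forall n k, (n <= k)%N -> sqnorm (ps n - ps k) <= C / n.+1%:R) ->
  exists p, forall n, sqnorm (ps n - p) <= d%:R * C / n.+1%:R.
Proof.
move=> ps_cauchy.
have coord_lim i : exists l, forall n, (ps n 0 i - l) ^+ 2 <= C / n.+1%:R.
  apply: cauchy_sq_lim => n k nk; apply: le_trans (ps_cauchy _ _ nk).
  by have := sqr_coord_le_sqnorm (ps n - ps k) i; rewrite !mxE.
have [L L_lim] := choice coord_lim.
exists (\row_i L i) => n.
have -> : d%:R * C / n.+1%:R = \sum_(i < d) C / n.+1%:R.
  by rewrite sumr_const card_ord -mulrA mulr_natl.
by rewrite /sqnorm; apply: ler_sum => i _; rewrite !mxE; exact: L_lim.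
Qed.

End Euclidean.

Section StrongConvexity.
Context {R : realType} {d : nat}.

(* [strongly_convex mu phi] is [strongly_convex_with mu phi (grad phi)]; an
   abstract gradient field is needed for the prox objective. *)
Definition strongly_convex_with (mu : R) (phi : 'rV[R]_d -> R)
    (g : 'rV[R]_d -> 'rV[R]_d) : Prop :=
  forall x y, phi y + dotv (g y) (x - y) + mu / 2 * sqnorm (x - y) <= phi x.

Variables (mu : R) (phi : 'rV[R]_d -> R) (g : 'rV[R]_d -> 'rV[R]_d).
Hypothesis phi_sc : strongly_convex_with mu phi g.

Lemma strongly_convex_segment a b (t : R) : 0 <= t <= 1 ->
  phi (a + t *: (b - a)) <=
    (1 - t) * phi a + t * phi b - mu * t * (1 - t) / 2 * sqnorm (b - a).
Proof.
move=> /andP[t0 t1]; set w := a + t *: (b - a).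
have ea : a - w = (- t) *: (b - a) by apply/rowP => i; rewrite !mxE; ring.
have eb : b - w = (1 - t) *: (b - a) by apply/rowP => i; rewrite !mxE; ring.
have sc_a := phi_sc a w; have sc_b := phi_sc b w.
rewrite ea sqnormZ dotvZr in sc_a; rewrite eb sqnormZ dotvZr in sc_b.
have t1' : 0 <= 1 - t by rewrite subr_ge0.
have := ler_wpM2l t1' sc_a; have := ler_wpM2l t0 sc_b.
set S := sqnorm (b - a); set G := dotv (g w) (b - a); nra.
Qed.

Lemma strongly_convex_bounded_below y x : 0 < mu ->
  phi y - sqnorm (g y) / (2 * mu) <= phi x.
Proof.
move=> mu0; have Y := dotv_young (g y) (x - y) mu; have := phi_sc x y.
have : - dotv (g y) (x - y) - mu / 2 * sqnorm (x - y) <= sqnorm (g y) / (2 * mu).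
  rewrite ler_pdivlMr ?mulr_gt0 //; nra.
lra.
Qed.

(* Lower semicontinuity along [ps], from the gradient inequality at [p] rather
   than from continuity of [phi]. *)
Lemma strongly_convex_le_limit (ps : nat -> 'rV[R]_d) p (A M : R) : 0 <= mu ->
  (forall n, sqnorm (ps n - p) <= A / n.+1%:R) ->
  (forall n, phi (ps n) <= M + n.+1%:R^-1) -> phi p <= M.
Proof.
move=> mu0 ps_p ps_M; rewrite -subr_le0.
apply: (@le0_of_le_small _ _ (sqnorm (g p) / 2)) => s /andP[s0 _].
rewrite -subr_le0; apply: (@le0_of_le_harmonic _ _ (1 + A / (2 * s))) => n.
have sc_p := phi_sc (ps n) p; have Y := dotv_young (ps n - p) (g p) s.
rewrite dotvC in Y.
set V := sqnorm (ps n - p) in sc_p Y; set P := sqnorm (g p) in Y *.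
set X := dotv (g p) (ps n - p) in sc_p Y.
have V0 : 0 <= V := sqnorm_ge0 _.
have X_le : - X <= V / (2 * s) + s * (P / 2).
  have -> : V / (2 * s) + s * (P / 2) = (V + s ^+ 2 * P) / (2 * s) by field; lra.
  rewrite ler_pdivlMr ?mulr_gt0 //; lra.
have V_le : V / (2 * s) <= A / n.+1%:R / (2 * s).
  by rewrite ler_pM2r ?invr_gt0 ?mulr_gt0 //; exact: ps_p.
have -> : (1 + A / (2 * s)) / n.+1%:R = n.+1%:R^-1 + A / n.+1%:R / (2 * s).
  by field; apply/andP; split; apply/negP => /eqP; have := ler0n R n; lra.
have := ps_M n; have : 0 <= mu / 2 * V by rewrite mulr_ge0 ?divr_ge0.
move: X_le V_le; move: (V / (2 * s)) (A / n.+1%:R / (2 * s)) (n.+1%:R^-1) => W Q q.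
lra.
Qed.

Lemma strongly_convex_has_min : 0 < mu -> exists p, forall x, phi p <= phi x.
Proof.
move=> mu0.
have phi_inf : has_inf (range phi).
  split; first by exists (phi 0), 0.
  exists (phi 0 - sqnorm (g 0) / (2 * mu)) => _ [x _ <-].
  exact: strongly_convex_bounded_below.
set M := inf (range phi).
have M_le x : M <= phi x by apply: ge_inf phi_inf.2 _ _; exists x.
have approx n : exists x, phi x < M + n.+1%:R^-1.
  have n0 : 0 < n.+1%:R^-1 :> R by rewrite invr_gt0 ltr0Sn.
  have [_ [x _ <-] ?] := inf_adherent n0 phi_inf.
  by exists x.
have [ps ps_M] := choice approx.
have ps_cauchy n k : (n <= k)%N -> sqnorm (ps n - ps k) <= 8 / mu / n.+1%:R.
  move=> nk; rewrite mulrAC ler_pdivlMr //.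
  have half : 0 <= (2^-1 : R) <= 1 by rewrite invr_ge0 ler0n invf_le1 ?ler1n.
  have := strongly_convex_segment (ps k) (ps n) (2^-1) half.
  have := M_le (ps k + 2^-1 *: (ps n - ps k)); have := ps_M n; have := ps_M k.
  have : k.+1%:R^-1 <= n.+1%:R^-1 :> R.
    by rewrite lef_pV2 ?posrE ?ltr0Sn // ler_nat.
  move: (sqnorm _) (n.+1%:R^-1) (k.+1%:R^-1) => V q r; nra.
have [p ps_p] := rV_cauchy_lim _ _ ps_cauchy.
exists p => x; apply: le_trans (M_le x).
exact: strongly_convex_le_limit (ltW mu0) ps_p (fun n => ltW (ps_M n)).
Qed.

End StrongConvexity.

Section Prox.
Context {R : realType} {d : nat}.
Variables (mu gamma : R) (phi : 'rV[R]_d -> R) (g : 'rV[R]_d -> 'rV[R]_d).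
Hypotheses (mu_gt0 : 0 < mu) (gamma_gt0 : 0 < gamma).
Hypothesis phi_sc : strongly_convex_with mu phi g.

Let inv_gamma : gamma^-1 = 2 * (2 * gamma)^-1.
Proof. by rewrite invfM mulrA divff ?mul1r ?pnatr_eq0. Qed.

Lemma prox_objective_strongly_convex y :
  strongly_convex_with mu (fun x => phi x + (2 * gamma)^-1 * sqnorm (x - y))
                          (fun x => g x + gamma^-1 *: (x - y)).
Proof.
move=> x w /=.
have -> : x - y = (w - y) + (x - w) by apply/rowP => i; rewrite !mxE; ring.
rewrite (sqnormD (w - y)) dotvDl dotvZl inv_gamma.
have k0 : 0 <= (2 * gamma)^-1 by rewrite invr_ge0 mulr_ge0 // ltW.
have := phi_sc x w; have := mulr_ge0 k0 (sqnorm_ge0 (x - w)); lra.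
Qed.

Lemma prox_min y x :
  phi (prox phi gamma y) + (2 * gamma)^-1 * sqnorm (prox phi gamma y - y)
    <= phi x + (2 * gamma)^-1 * sqnorm (x - y).
Proof.
have [p p_min] :=
  strongly_convex_has_min _ _ _ (prox_objective_strongly_convex y) mu_gt0.
by move: x; rewrite /prox; case: xgetP => // /(_ p).
Qed.

(* First-order optimality of the prox point, in integrated form: the
   direction [(y - p) / gamma] is a strong subgradient of [phi] at [p]. *)
Lemma prox_variational_ineq y z (p := prox phi gamma y) :
  phi p + gamma^-1 * dotv (y - p) (z - p) + mu / 2 * sqnorm (z - p) <= phi z.
Proof.
set D := sqnorm (z - p); set B := dotv (y - p) (z - p); set k := (2 * gamma)^-1.
rewrite -subr_le0 inv_gamma.
apply: (@le0_of_le_small _ _ (mu / 2 * D + k * D)) => t /andP[t0 t1].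
have := prox_min y (p + t *: (z - p)).
have -> : p + t *: (z - p) - y = (p - y) + t *: (z - p).
  by apply/rowP => i; rewrite !mxE; ring.
rewrite (sqnormD (p - y)) sqnormZ dotvZr -opprB dotvNl -/p -/B -/D -/k.
have t01 : 0 <= t <= 1 by rewrite ltW.
have := strongly_convex_segment _ _ _ phi_sc p z t t01; rewrite -/D.
move: (phi (p + _)) => W seg p_min.
have : t * (phi p + 2 * k * B + mu / 2 * D - phi z - t * (mu / 2 * D + k * D)) <= 0.
  nra.
by rewrite pmulr_rle0 // subr_le0.
Qed.

Lemma prox_contraction y z :
  (1 + gamma * mu) ^+ 2 * sqnorm (prox phi gamma y - z)
    <= sqnorm (y - z - gamma *: g z).
Proof.
set p := prox phi gamma y; set u := y - z - gamma *: g z.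
have /= := prox_variational_ineq y z; rewrite -/p => var.
have sc := phi_sc p z.
have pz : p - z = - (z - p) by rewrite opprB.
have ypu : y - p = u + gamma *: g z + (z - p).
  by apply/rowP => i; rewrite !mxE; ring.
rewrite ypu dotvDl (dotvDl u) dotvZl dotvv in var; rewrite pz sqnormN dotvNr in sc *.
set D := sqnorm (z - p) in var sc *; set U := dotv u (z - p) in var.
set G := dotv (g z) (z - p) in var sc.
have : gamma^-1 * (U + D) + mu * D <= 0.
  by move: var; rewrite !mulrDr mulrA mulVf ?gt_eqF // mul1r; lra.
move/(ler_wpM2l (ltW gamma_gt0)); rewrite mulr0 mulrDr mulrA divff ?gt_eqF // mul1r.
set s := 1 + gamma * mu => key.
have s0 : 0 <= s by rewrite addr_ge0 // mulr_ge0 // ltW.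
have sD : s * D <= - U by rewrite /s; lra.
have := ler_wpM2l s0 sD; have := dotv_young u (z - p) s.
rewrite -/D -/U; nra.
Qed.

End Prox.

(* Monotonicity of the integral of nonnegative functions holds without any
   measurability assumption, the integral being a supremum over simple functions. *)
Lemma ge0_le_integralT {R : realType} {dT : measure_display} {T : measurableType dT}
    (mu : {measure set T -> \bar R}) {f g : T -> \bar R} :
  (forall x, 0 <= f x)%E -> (forall x, f x <= g x)%E ->
  (\int[mu]_(x in setT) f x <= \int[mu]_(x in setT) g x)%E.
Proof.
move=> f0 fg; have g0 x : (0 <= g x)%E by exact: le_trans (f0 x) (fg x).
rewrite !ge0_integralTE //; apply: ereal_sup_le => _ [h h_f <-].
by exists h => // x; exact: le_trans (h_f x) (fg x).
Qed.

Section Expectation.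
Context {R : realType} {d : nat} {dx : measure_display} {Xi : measurableType dx}.
Variable D : probability Xi R.

Lemma integral_cst_probability (r : R) : (\int[D]_(xi in setT) r%:E = r%:E)%E.
Proof. by rewrite integral_cst //= probability_setT mule1. Qed.

Lemma integral_sub_mean (u v : Xi -> R) (c : R) :
  D.-integrable setT (fun xi => (u xi)%:E) -> D.-integrable setT (fun xi => (v xi)%:E) ->
  Rintegral D setT u = c -> Rintegral D setT v = 0 ->
  (\int[D]_(xi in setT) (u xi - c - v xi)%:E = 0)%E.
Proof.
move=> u_int v_int <- v0.
have cst_int : D.-integrable setT (fun=> (Rintegral D setT u)%:E).
  exact: finite_measure_integrable_cst.
under eq_integral do rewrite !EFinB.
rewrite integralB //; last exact: integrableB.
rewrite integralB // integral_cst_probability.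
rewrite -(fineK (integrable_fin_num measurableT u_int)).
rewrite -(fineK (integrable_fin_num measurableT v_int)).
by move: v0; rewrite /Rintegral => ->; rewrite -!EFinB subrr sub0r oppr0.
Qed.

Variable h : Xi -> 'rV[R]_d.
Hypothesis h_int : forall i, D.-integrable setT (fun xi => (h xi 0 i)%:E).
Hypothesis h_centered : forall i, (\int[D]_(xi in setT) (h xi 0 i)%:E = 0)%E.

Lemma measurable_sqnorm : measurable_fun setT (fun xi => sqnorm (h xi)).
Proof.
have mh i : measurable_fun setT (fun xi => h xi 0 i).
  by apply/measurable_realfun.measurable_EFinP; exact: measurable_int (h_int i).
apply: measurable_sum => i; under eq_fun do rewrite expr2.
exact: measurable_realfun.measurable_funM.
Qed.

Let dotvE (a : 'rV[R]_d) :
  (fun xi => (dotv a (h xi))%:E) =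
  (fun xi => \sum_(i < d) (a 0 i)%:E * (h xi 0 i)%:E)%E.
Proof.
by apply/funext => xi; rewrite /dotv -sumEFin; apply: eq_bigr => i _; rewrite EFinM.
Qed.

Lemma integrable_dotv a : D.-integrable setT (fun xi => (dotv a (h xi))%:E).
Proof.
by rewrite dotvE; apply: (integrable_sum measurableT) => i _; exact: integrableZl.
Qed.

Lemma integral_dotv_centered a : (\int[D]_(xi in setT) (dotv a (h xi))%:E = 0)%E.
Proof.
rewrite dotvE (integral_sum measurableT) => [|i]; last exact: integrableZl.
by rewrite big1 // => i _; rewrite integralZl // h_centered mule0.
Qed.

Hypothesis h_sq_int : D.-integrable setT (fun xi => (sqnorm (h xi))%:E).

Lemma integral_sqnorm_add_centered a (gamma : R) :
  D.-integrable setT (fun xi => (sqnorm (a + gamma *: h xi))%:E) /\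
  (\int[D]_(xi in setT) (sqnorm (a + gamma *: h xi))%:E =
    (sqnorm a)%:E + (gamma ^+ 2)%:E * \int[D]_(xi in setT) (sqnorm (h xi))%:E)%E.
Proof.
have -> : (fun xi => (sqnorm (a + gamma *: h xi))%:E) =
    (fun xi => (sqnorm a)%:E + ((2 * gamma)%:E * (dotv a (h xi))%:E
                                + (gamma ^+ 2)%:E * (sqnorm (h xi))%:E))%E.
  apply/funext => xi; rewrite sqnormD sqnormZ dotvZr -!EFinM -!EFinD.
  by congr (_%:E); ring.
have dot_int := integrable_dotv a.
have Zdot_int : D.-integrable setT (fun xi => (2 * gamma)%:E * (dotv a (h xi))%:E)%E.
  exact: integrableZl.
have Zsq_int : D.-integrable setT (fun xi => (gamma ^+ 2)%:E * (sqnorm (h xi))%:E)%E.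
  exact: integrableZl.
have cst_int : D.-integrable setT (fun=> (sqnorm a)%:E).
  exact: finite_measure_integrable_cst.
split; first by apply: integrableD => //; exact: integrableD.
rewrite integralD //; last exact: integrableD.
rewrite integralD // integral_cst_probability !integralZl //.
by rewrite integral_dotv_centered mule0 add0e.
Qed.

End Expectation.

Section SppmGc.
Context {R : realType} {d : nat} {dx : measure_display} {Xi : measurableType dx}.
Variables (D : probability Xi R) (F : Xi -> 'rV[R]_d -> R).
Variables (mu delta gamma : R) (xs : 'rV[R]_d).
Hypothesis grad_int :
  forall x i, D.-integrable setT (fun xi => (grad (F xi) x 0 i)%:E).
Hypothesis variance_bound : forall x,
  (\int[D]_(xi in setT) (sqnorm (grad (F xi) x - gradf D F x - grad (F xi) xs))%:E
     <= (delta ^+ 2 * sqnorm (x - xs))%:E)%E.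

Local Notation noise x xi := (grad (F xi) x - gradf D F x - grad (F xi) xs).

Let gradfE x i : gradf D F x 0 i = Rintegral D setT (fun xi => grad (F xi) x 0 i).
Proof. by rewrite /gradf mxE. Qed.

Lemma gradf_eq0 : gradf D F xs = 0.
Proof.
apply: sqnorm_le0; rewrite -lee_fin.
have := variance_bound xs.
under eq_integral => xi _.
  have -> : grad (F xi) xs - gradf D F xs - grad (F xi) xs = - gradf D F xs.
    by apply/rowP => i; rewrite !mxE; ring.
  rewrite sqnormN; over.
by rewrite integral_cst_probability subrr sqnorm0 mulr0.
Qed.

Let noiseE x i : (fun xi => (noise x xi 0 i)%:E) =
  (fun xi => (grad (F xi) x 0 i)%:E - (gradf D F x 0 i)%:E - (grad (F xi) xs 0 i)%:E)%E.
Proof. by apply/funext => xi; rewrite !coordB !EFinB. Qed.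

Lemma noise_integrable x i : D.-integrable setT (fun xi => (noise x xi 0 i)%:E).
Proof.
rewrite noiseE; apply: integrableB => //; apply: integrableB => //.
exact: finite_measure_integrable_cst.
Qed.

Lemma noise_centered x i : (\int[D]_(xi in setT) (noise x xi 0 i)%:E = 0)%E.
Proof.
under eq_integral do rewrite !coordB.
apply: integral_sub_mean; rewrite ?gradfE //.
by rewrite -gradfE gradf_eq0 coord0.
Qed.

Lemma noise_sqnorm_integrable x :
  D.-integrable setT (fun xi => (sqnorm (noise x xi))%:E).
Proof.
apply/integrableP; split.
  apply/measurable_realfun.measurable_EFinP.
  exact: measurable_sqnorm _ (fun xi => noise x xi) (noise_integrable x).
rewrite (eq_integral (fun xi => (sqnorm (noise x xi))%:E)) => [|xi _].
  by apply: le_lt_trans (variance_bound x) _; exact: ltry.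
by rewrite /= ger0_norm ?sqnorm_ge0.
Qed.

Lemma expected_step_sqnorm_le x :
  D.-integrable setT (fun xi => (sqnorm (x - xs + gamma *: noise x xi))%:E) /\
  (\int[D]_(xi in setT) (sqnorm (x - xs + gamma *: noise x xi))%:E
     <= ((1 + gamma ^+ 2 * delta ^+ 2) * sqnorm (x - xs))%:E)%E.
Proof.
have [step_int ->] := integral_sqnorm_add_centered D (fun xi => noise x xi)
  (noise_integrable x) (noise_centered x) (noise_sqnorm_integrable x) (x - xs) gamma.
split => //; apply: le_trans (leeD2l _ (lee_wpmul2l _ (variance_bound x))) _.
  by rewrite lee_fin sqr_ge0.
by rewrite -EFinM -EFinD lee_fin mulrDl mul1r mulrA.
Qed.

Lemma sppm_gc_step_contraction xi x : 0 < mu -> 0 < gamma ->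
  strongly_convex mu (F xi) ->
  sqnorm (sppm_gc_step D F gamma xi x - xs)
    <= sqnorm (x - xs + gamma *: noise x xi) / (1 + gamma * mu) ^+ 2.
Proof.
move=> mu_gt0 gamma_gt0 F_sc.
(* Stated for abstract vectors: [mxE] must not reach inside [grad]. *)
have shift (a b c : 'rV[R]_d) :
    x + gamma *: (a - b) - xs - gamma *: c = x - xs + gamma *: (a - b - c).
  by apply/rowP => i; rewrite !mxE; ring.
rewrite ler_pdivlMr ?exprn_gt0 ?addr_gt0 ?mulr_gt0 // mulrC -shift.
exact: prox_contraction.
Qed.

Lemma sppm_gc_err_ge0 k x : (0 <= sppm_gc_err D F gamma xs k x)%E.
Proof.
elim: k x => [|k IH] x /=; first by rewrite lee_fin sqnorm_ge0.
by apply: integral_ge0 => xi _; exact: IH.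
Qed.

End SppmGc.

Theorem mainTheorem7 (R : realType) (d : nat) (dx : measure_display)
  (Xi : measurableType dx) (D : probability Xi R)
  (F : Xi -> 'rV[R]_d -> R) (mu delta gamma : R) (xs x0 : 'rV[R]_d) :
  0 < mu ->
  (forall xi x, differentiable (F xi) x) ->
  (forall xi, strongly_convex mu (F xi)) ->
  (forall x, D.-integrable setT (fun xi => (F xi x)%:E)) ->
  (forall x (i : 'I_d), D.-integrable setT (fun xi => (grad (F xi) x 0 i)%:E)) ->
  (forall x, fexp D F xs <= fexp D F x) ->
  0 <= delta ->
  (forall x, (\int[D]_(xi in setT)
                (sqnorm (grad (F xi) x - gradf D F x - grad (F xi) xs))%:E
              <= (delta ^+ 2 * sqnorm (x - xs))%:E)%E) ->
  0 < gamma ->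
  forall k : nat,
    (sppm_gc_err D F gamma xs k x0
     <= ((((1 + gamma ^+ 2 * delta ^+ 2) / (1 + gamma * mu) ^+ 2) ^+ k)
          * sqnorm (x0 - xs))%:E)%E.
Proof.
move=> mu_gt0 _ F_sc _ grad_int _ _ variance_bound gamma_gt0 k.
set s := (1 + gamma * mu) ^+ 2; set c := (1 + gamma ^+ 2 * delta ^+ 2) / s.
have s_gt0 : 0 < s by rewrite exprn_gt0 ?addr_gt0 ?mulr_gt0.
have c_ge0 : 0 <= c.
  by apply: divr_ge0 (ltW s_gt0); rewrite addr_ge0 // mulr_ge0 // sqr_ge0.
elim: k x0 => [|k IH] x /=; first by rewrite expr0 mul1r.
pose noise xi := grad (F xi) x - gradf D F x - grad (F xi) xs.
have [step_int step_le] :=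
  expected_step_sqnorm_le D F delta gamma xs grad_int variance_bound x.
have pointwise xi : (sppm_gc_err D F gamma xs k (sppm_gc_step D F gamma xi x)
    <= ((c ^+ k / s) * sqnorm (x - xs + gamma *: noise xi))%:E)%E.
  apply: le_trans (IH _) _; rewrite lee_fin -mulrA ler_wpM2l ?exprn_ge0 // mulrC.
  exact: sppm_gc_step_contraction.
have err_ge0 xi := sppm_gc_err_ge0 D F gamma xs k (sppm_gc_step D F gamma xi x).
apply: le_trans (ge0_le_integralT D err_ge0 pointwise) _.
under eq_integral do rewrite EFinM.
rewrite integralZl //; apply: le_trans (lee_wpmul2l _ step_le) _.
  by rewrite lee_fin; apply: divr_ge0; [exact: exprn_ge0 | exact: ltW].
rewrite -EFinM (_ : c ^+ k / s * _ = c ^+ k.+1 * sqnorm (x - xs)) //.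
by rewrite (exprSr c) /c; ring.
Qed.
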